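(* For all integers $n\ge1$ and $r\ge0$, and all $X>0$, $$P^{n}\big[X^{n}\check q_r(\alpha)\big](X)=\frac{(-1)^{n}}{\binom{r+n}{n}}\,(P-1)\Big(P-\tfrac12\Big)\cdots\Big(P-\tfrac1n\Big)\big[\check q_{r+n}(\alpha)\big](X).$$
   Context: For $X>0$, $\alpha=X-\lfloor X\rfloor$. $P[f](X)=\frac1X\int_0^X f(x)\,dx$, $1$ denotes the identity operator, and polynomials in $P$ act by composition. The polynomials $q_n$ are defined by $q_1(\alpha)=\alpha-\tfrac12$ and $q_{n+1}'=q_n$, $\int_0^1 q_{n+1}=0$; $\check q_j(\alpha):=j!\,q_{j+1}(\alpha)$, regarded as period-1 functions of $X$. *)

From Stdlib Require Import Reals.
From Coquelicot Require Import Coquelicot.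
Open Scope R_scope.

Definition alpha (X : R) : R := frac_part X.

(* The polynomials q_n: q_0 = 1 (unused), q_1(a) = a - 1/2,
   q_{n+1} = the antiderivative of q_n with zero mean on [0,1]:
   q_{n+1}(a) = int_0^a q_n - int_0^1 (int_0^t q_n) dt. *)
Fixpoint q (n : nat) : R -> R :=
  match n with
  | O => fun _ => 1
  | S O => fun a => a - / 2
  | S m => fun a =>
      RInt (q m) 0 a - RInt (fun t => RInt (q m) 0 t) 0 1
  end.

(* \check q_j (alpha) = j! q_{j+1}(alpha), as a function of X (period 1). *)
Definition qcheck (j : nat) (X : R) : R := INR (Factorial.fact j) * q (S j) (alpha X).

Definition P (f : R -> R) : R -> R := fun X => / X * RInt f 0 X.

Fixpoint Pprod (n : nat) (f : R -> R) : R -> R :=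
  match n with
  | O => f
  | S k => fun X => P (Pprod k f) X - / INR (S k) * Pprod k f X
  end.

From Stdlib Require Import Reals Lra Lia.
From Coquelicot Require Import Coquelicot.
Open Scope R_scope.

(* Since q_{m+1} has zero mean on [0, 1], q_{m+2}(0) = q_{m+2}(1), so x |-> q_{m+2}(alpha x)
   is continuous, and integrating by parts on each [k, k + 1] with q_{m+2}' = q_{m+1} gives
     P[x^(k+1) qcheck_r] = (X^k qcheck_{r+1} - (k+1) P[x^k qcheck_{r+1}]) / (r+1).
   Induction on n, using that P is linear and commutes with its own iterates, then yields the
   formula: -(k+1)/(r+1) is the ratio between consecutive coefficients (-1)^n / C(r+n, n), and
   the leftover terms recombine as (P - 1/(k+1)) applied to the previous product. *)
Lemma continuous_Rmult (f g : R -> R) x :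
  continuous f x -> continuous g x -> continuous (fun y => f y * g y) x.
Proof. exact (continuous_mult f g x). Qed.

Lemma continuous_Rplus (f g : R -> R) x :
  continuous f x -> continuous g x -> continuous (fun y => f y + g y) x.
Proof. exact (continuous_plus f g x). Qed.

Lemma continuous_Rminus (f g : R -> R) x :
  continuous f x -> continuous g x -> continuous (fun y => f y - g y) x.
Proof. exact (continuous_minus f g x). Qed.

Lemma continuous_pow n x : continuous (fun y => y ^ n) x.
Proof. apply (ex_derive_continuous (V := R_NormedModule)); auto_derive; auto. Qed.

Lemma continuous_shift (u : R -> R) c x :
  (forall z, continuous u z) -> continuous (fun y => u (y - c)) x.
Proof.
  intros Hu; apply (continuous_comp (fun y => y - c) u); [|apply Hu].
  apply continuous_Rminus; [apply continuous_id | apply continuous_const].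
Qed.

Lemma ex_RInt_of_continuous (g : R -> R) a b :
  (forall x, continuous g x) -> ex_RInt g a b.
Proof. intros Hg; apply (ex_RInt_continuous (V := R_CompleteNormedModule)); auto. Qed.

Lemma is_derive_primitive (g : R -> R) x :
  (forall y, continuous g y) -> is_derive (RInt g 0) x (g x).
Proof.
  intros Hg; apply is_derive_RInt with (a := 0); [|apply Hg].
  apply filter_forall; intros y.
  apply (RInt_correct (V := R_CompleteNormedModule)), ex_RInt_of_continuous, Hg.
Qed.

Lemma continuous_primitive (g : R -> R) x :
  (forall y, continuous g y) -> continuous (RInt g 0) x.
Proof.
  intros Hg; apply (ex_derive_continuous (V := R_NormedModule)).
  eexists; apply is_derive_primitive, Hg.
Qed.

Lemma alpha_on_unit_interval k y : IZR k <= y < IZR k + 1 -> alpha y = y - IZR k.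
Proof.
  intros Hy; unfold alpha, frac_part.
  rewrite <- (Int_part_spec y k) by lra; reflexivity.
Qed.

Section PeriodicCompAlpha.
Variable u : R -> R.
Hypothesis u_cont : forall x, continuous u x.
Hypothesis u_periodic : u 0 = u 1.

Lemma comp_alpha_on_unit_interval k y :
  IZR k <= y <= IZR k + 1 -> u (alpha y) = u (y - IZR k).
Proof.
  intros Hy; destruct (Req_dec y (IZR k + 1)) as [->|Hne].
  - rewrite (alpha_on_unit_interval (k + 1)), plus_IZR by (rewrite plus_IZR; lra).
    replace (IZR k + IZR 1 - (IZR k + IZR 1)) with 0 by ring.
    replace (IZR k + IZR 1 - IZR k) with 1 by (simpl; ring).
    exact u_periodic.
  - rewrite (alpha_on_unit_interval k) by lra; reflexivity.
Qed.

(* Near an integer [k], [u (alpha y)] is [u (y - (k - 1))] on the left and [u (y - k)] on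
   the right; the two pieces glue continuously because [u 0 = u 1]. *)
Lemma continuous_comp_alpha x : continuous (fun y => u (alpha y)) x.
Proof.
  set (k := Int_part x); destruct (base_Int_part x) as [Hk1 Hk2]; fold k in Hk1, Hk2.
  destruct (Req_dec x (IZR k)) as [Hx|Hx].
  - apply (continuous_ext_loc _
      (extension_cont (fun y => u (y - IZR (k - 1))) (fun y => u (y - IZR k)) (IZR k))).
    + apply (locally_interval _ x (IZR k - 1) (IZR k + 1)); simpl; try lra.
      intros y Hy1 Hy2; unfold extension_cont.
      destruct (Rle_dec y (IZR k)).
      * rewrite (comp_alpha_on_unit_interval (k - 1)); auto.
        rewrite minus_IZR; simpl; lra.
      * rewrite (comp_alpha_on_unit_interval k); auto; lra.
    + rewrite Hx; apply extension_cont_continuous; try apply continuous_shift, u_cont.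
      rewrite minus_IZR; simpl.
      replace (IZR k - (IZR k - 1)) with 1 by ring; rewrite Rminus_diag.
      symmetry; exact u_periodic.
  - apply (continuous_ext_loc _ (fun y => u (y - IZR k))); [|apply continuous_shift, u_cont].
    apply (locally_interval _ x (IZR k) (IZR k + 1)); simpl; try lra.
    intros y Hy1 Hy2; rewrite (comp_alpha_on_unit_interval k); auto; lra.
Qed.

End PeriodicCompAlpha.

Lemma q_succ_succ m :
  q (S (S m)) = fun a => RInt (q (S m)) 0 a - RInt (fun t => RInt (q (S m)) 0 t) 0 1.
Proof. reflexivity. Qed.

Lemma continuous_q m x : continuous (q m) x.
Proof.
  revert x; induction m as [|[|m] IH]; intros x.
  - apply continuous_const.
  - apply continuous_Rminus; [apply continuous_id | apply continuous_const].
  - rewrite q_succ_succ.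
    apply continuous_Rminus; [apply continuous_primitive, IH | apply continuous_const].
Qed.

Lemma is_derive_q m x : is_derive (q (S (S m))) x (q (S m) x).
Proof.
  rewrite q_succ_succ; pose proof (continuous_q (S m)) as HQ.
  generalize dependent (q (S m)); intros Q HQ.
  auto_derive; [|ring].
  split; [apply ex_RInt_of_continuous, HQ|split; [|exact I]].
  apply filter_forall; intros; apply continuity_pt_filterlim, HQ.
Qed.

Lemma RInt_q_unit m : RInt (q (S m)) 0 1 = 0.
Proof.
  destruct m as [|m].
  - change (q 1) with (fun a => a - / 2).
    set (F a := a * a / 2 - a / 2).
    assert (DF : forall a, Derive F a = a - / 2).
    { intros a; apply is_derive_unique; unfold F; auto_derive; auto; field. }
    rewrite (RInt_ext _ (Derive F)) by (intros; rewrite DF; reflexivity).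
    rewrite RInt_Derive; [unfold F; lra| |]; intros y _.
    + unfold F; auto_derive; auto.
    + apply (continuous_ext (fun a => a - / 2)); [intros; symmetry; apply DF|].
      apply continuous_Rminus; [apply continuous_id | apply continuous_const].
  - rewrite q_succ_succ; pose proof (continuous_q (S m)) as HQ.
    generalize dependent (q (S m)); intros Q HQ.
    rewrite (RInt_minus (V := R_CompleteNormedModule)).
    + rewrite RInt_const; unfold minus, plus, opp, scal; simpl; unfold mult; simpl.
      change (RInt (RInt Q 0) 0 1) with (RInt (fun t => RInt Q 0 t) 0 1); ring.
    + apply ex_RInt_of_continuous; intros; apply continuous_primitive, HQ.
    + apply ex_RInt_const.
Qed.

Lemma q_periodic m : q (S (S m)) 0 = q (S (S m)) 1.
Proof. rewrite q_succ_succ, RInt_q_unit, RInt_point; unfold zero; simpl; ring. Qed.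

Lemma continuous_q_alpha m x : continuous (fun y => q (S (S m)) (alpha y)) x.
Proof. apply continuous_comp_alpha; [apply continuous_q | apply q_periodic]. Qed.

Lemma is_RInt_by_unit_intervals (f F : R -> R) :
  (forall (k : nat) a b, INR k <= a <= b -> b <= INR k + 1 -> is_RInt f a b (F b - F a)) ->
  forall X, 0 <= X -> is_RInt f 0 X (F X - F 0).
Proof.
  intros Hpiece.
  assert (Hbounded : forall N X, 0 <= X <= INR N -> is_RInt f 0 X (F X - F 0)).
  { induction N as [|N IH]; intros X [HX0 HXN].
    - simpl in HXN; replace X with 0 by lra.
      replace (F 0 - F 0) with (@zero R_NormedModule) by (unfold zero; simpl; ring).
      apply is_RInt_point.
    - rewrite S_INR in HXN; destruct (Rle_lt_dec X (INR N)) as [HX|HX]; [apply IH; lra|].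
      replace (F X - F 0) with (plus (F (INR N) - F 0) (F X - F (INR N)))
        by (unfold plus; simpl; ring).
      apply (is_RInt_Chasles f 0 (INR N)); [apply IH; split; [apply pos_INR|lra]|].
      apply (Hpiece N); lra. }
  intros X HX; destruct (INR_unbounded X) as [N HN].
  apply (Hbounded N); lra.
Qed.

Section IntegrationByParts.
Variables u v : R -> R.
Hypothesis u_cont : forall x, continuous u x.
Hypothesis v_derive : forall x, is_derive v x (u x).
Hypothesis v_periodic : v 0 = v 1.

Let v_cont x : continuous v x.
Proof. apply (ex_derive_continuous (V := R_NormedModule)); eexists; apply v_derive. Qed.

Let v_alpha_cont x : continuous (fun y => v (alpha y)) x.
Proof. apply continuous_comp_alpha; auto. Qed.

(* On [k, k + 1] the antiderivative below is that of [x ^ (S n) * u (x - k)]; the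
   endpoint values agree with those in the lemma thanks to [v 0 = v 1]. *)
Lemma is_RInt_pow_comp_alpha n X : 0 <= X ->
  is_RInt (fun x => x ^ S n * u (alpha x)) 0 X
    (X ^ S n * v (alpha X) - INR (S n) * RInt (fun t => t ^ n * v (alpha t)) 0 X).
Proof.
  intros HX.
  set (I y := RInt (fun t => t ^ n * v (alpha t)) 0 y).
  set (F y := y ^ S n * v (alpha y) - INR (S n) * I y).
  assert (HF0 : F 0 = 0) by (unfold F, I; rewrite RInt_point; unfold zero; simpl; ring).
  enough (H : is_RInt (fun x => x ^ S n * u (alpha x)) 0 X (F X - F 0))
    by (rewrite HF0, Rminus_0_r in H; exact H).
  apply is_RInt_by_unit_intervals; auto; intros k a b [Hka Hab] Hbk.
  assert (Hint : forall y, continuous (fun t => t ^ n * v (alpha t)) y).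
  { intros; apply continuous_Rmult; [apply continuous_pow | apply v_alpha_cont]. }
  rewrite INR_IZR_INZ in Hka, Hbk; set (c := IZR (Z.of_nat k)) in Hka, Hbk.
  set (G y := y ^ S n * v (y - c) - INR (S n) * I y).
  set (g y := INR (S n) * y ^ n * v (y - c) + y ^ S n * u (y - c)
              - INR (S n) * (y ^ n * v (alpha y))).
  replace (F b - F a) with (minus (G b) (G a)).
  2:{ unfold F, G, minus, plus, opp; simpl.
      rewrite !(comp_alpha_on_unit_interval v v_periodic (Z.of_nat k)) by (fold c; lra).
      fold c; ring. }
  apply (is_RInt_ext g).
  { intros y Hy; rewrite Rmin_left, Rmax_right in Hy by lra; unfold g.
    rewrite (alpha_on_unit_interval (Z.of_nat k) y) by (fold c; lra); fold c.
    rewrite S_INR; simpl; ring. }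
  apply (is_RInt_derive (V := R_CompleteNormedModule)); intros y _.
  - unfold G, I; auto_derive.
    + repeat split.
      * eexists; apply v_derive.
      * apply ex_RInt_of_continuous, Hint.
      * apply filter_forall; intros; apply continuity_pt_filterlim, Hint.
    + replace (Derive (fun x => v x) (y + - c)) with (u (y - c))
          by (symmetry; apply is_derive_unique, v_derive).
      unfold g, Rminus; rewrite S_INR; destruct n; simpl; ring.
  - unfold g; repeat apply continuous_Rminus || apply continuous_Rplus || apply continuous_Rmult;
      auto using continuous_const, continuous_pow, continuous_shift, continuous_id.
Qed.

End IntegrationByParts.

(* The difference quotient of [RInt g 0] at [0] is the mean [/ y * RInt g 0 y]. *)
Lemma continuous_mean_at_0 (g : R -> R) : (forall x, continuous g x) ->
  continuous (fun y => if Req_EM_T y 0 then g 0 else / y * RInt g 0 y) 0.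
Proof.
  intros Hg; apply continuity_pt_filterlim, continuity_pt_locally; intros eps.
  pose proof (proj1 (is_derive_Reals _ _ _) (is_derive_primitive g 0 Hg)) as Hd.
  destruct (Hd eps (cond_pos eps)) as [d Hdy]; exists d; intros y Hy.
  change (Rabs (y - 0) < d) in Hy; rewrite Rminus_0_r in Hy.
  destruct (Req_EM_T 0 0) as [_|]; [|lra].
  destruct (Req_EM_T y 0) as [->|Hy0]; [rewrite Rminus_diag, Rabs_R0; apply cond_pos|].
  specialize (Hdy y Hy0 Hy); rewrite Rplus_0_l, RInt_point in Hdy.
  replace (/ y * RInt g 0 y) with ((RInt g 0 y - zero) / y)
    by (unfold zero; simpl; field; auto).
  exact Hdy.
Qed.

(* [P f 0 = 0] is a junk value ([/ 0 = 0]), so iterates of [P] are only controlled on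
   [X > 0]; agreeing there with a continuous function keeps them integrable on [0, X]. *)
Definition has_continuous_extension (f : R -> R) : Prop :=
  exists g, (forall x, continuous g x) /\ forall x, 0 < x -> f x = g x.

Lemma has_continuous_extension_of_continuous f :
  (forall x, continuous f x) -> has_continuous_extension f.
Proof. intros Hf; exists f; auto. Qed.

Lemma has_continuous_extension_ext f g : has_continuous_extension f ->
  (forall x, 0 < x -> f x = g x) -> has_continuous_extension g.
Proof. intros [h [Hh Hfh]] Hfg; exists h; split; auto; intros x Hx; rewrite <- Hfg; auto. Qed.

Lemma ex_RInt_of_has_continuous_extension f X :
  has_continuous_extension f -> 0 <= X -> ex_RInt f 0 X.
Proof.
  intros [g [Hg Hfg]] HX; apply (ex_RInt_ext g); [|apply ex_RInt_of_continuous, Hg].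
  intros x Hx; rewrite Rmin_left in Hx by lra; symmetry; apply Hfg; lra.
Qed.

Lemma has_continuous_extension_lin f g a b :
  has_continuous_extension f -> has_continuous_extension g ->
  has_continuous_extension (fun x => a * f x + b * g x).
Proof.
  intros [f' [Hf' Hff']] [g' [Hg' Hgg']]; exists (fun x => a * f' x + b * g' x); split.
  - intros x; apply continuous_Rplus; apply continuous_Rmult; auto using continuous_const.
  - intros x Hx; rewrite Hff', Hgg'; auto.
Qed.

Lemma has_continuous_extension_pow_mul f k :
  has_continuous_extension f -> has_continuous_extension (fun x => x ^ k * f x).
Proof.
  intros [g [Hg Hfg]]; exists (fun x => x ^ k * g x); split.
  - intros x; apply continuous_Rmult; auto using continuous_pow.
  - intros x Hx; rewrite Hfg; auto.
Qed.

Lemma P_ext f g X : (forall y, 0 < y -> f y = g y) -> 0 < X -> P f X = P g X.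
Proof.
  intros Hfg HX; unfold P; f_equal; apply RInt_ext; intros x Hx.
  rewrite Rmin_left in Hx by lra; apply Hfg; lra.
Qed.

Lemma has_continuous_extension_P f :
  has_continuous_extension f -> has_continuous_extension (P f).
Proof.
  intros [g [Hg Hfg]].
  exists (fun y => if Req_EM_T y 0 then g 0 else / y * RInt g 0 y); split.
  - intros x; destruct (Req_EM_T x 0) as [->|Hx]; [apply continuous_mean_at_0, Hg|].
    apply (continuous_ext_loc _ (fun y => / y * RInt g 0 y)).
    + destruct (Rlt_dec x 0) as [Hneg|Hpos].
      * apply (locally_interval _ x m_infty 0); simpl; auto.
        intros y _ Hy; destruct (Req_EM_T y 0); [lra|reflexivity].
      * apply (locally_interval _ x 0 p_infty); simpl; auto; try lra.
        intros y Hy _; destruct (Req_EM_T y 0); [lra|reflexivity].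
    + apply (ex_derive_continuous (V := R_NormedModule)); auto_derive; repeat split; auto.
      * apply ex_RInt_of_continuous, Hg.
      * apply filter_forall; intros; apply continuity_pt_filterlim, Hg.
  - intros x Hx; destruct (Req_EM_T x 0); [lra|].
    apply P_ext; auto.
Qed.

Lemma has_continuous_extension_iter_P f k :
  has_continuous_extension f -> has_continuous_extension (Nat.iter k P f).
Proof. intros Hf; induction k; simpl; auto using has_continuous_extension_P. Qed.

Lemma has_continuous_extension_Pprod f k :
  has_continuous_extension f -> has_continuous_extension (Pprod k f).
Proof.
  intros Hf; induction k as [|k IH]; [exact Hf|]; cbn [Pprod].
  apply (has_continuous_extension_ext (fun x => 1 * P (Pprod k f) x + - / INR (S k) * Pprod k f x)).
  - apply has_continuous_extension_lin; auto using has_continuous_extension_P.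
  - intros; ring.
Qed.

Lemma iter_P_ext f g k X : (forall y, 0 < y -> f y = g y) -> 0 < X ->
  Nat.iter k P f X = Nat.iter k P g X.
Proof.
  intros Hfg; revert X; induction k as [|k IH]; intros X HX; simpl; auto.
  apply P_ext; auto.
Qed.

Lemma P_lin f g a b X : has_continuous_extension f -> has_continuous_extension g -> 0 < X ->
  P (fun x => a * f x + b * g x) X = a * P f X + b * P g X.
Proof.
  intros Hf Hg HX; unfold P.
  rewrite (is_RInt_unique _ 0 X (a * RInt f 0 X + b * RInt g 0 X)); [ring|].
  apply (is_RInt_plus (V := R_CompleteNormedModule) (fun x => a * f x) (fun x => b * g x));
    apply (is_RInt_scal (V := R_CompleteNormedModule)), (RInt_correct (V := R_CompleteNormedModule));
    apply ex_RInt_of_has_continuous_extension; auto; lra.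
Qed.

Lemma P_scal f c X : has_continuous_extension f -> 0 < X ->
  P (fun x => c * f x) X = c * P f X.
Proof.
  intros Hf HX; rewrite (P_ext _ (fun x => c * f x + 0 * f x)) by (intros; ring || auto).
  rewrite P_lin by auto; ring.
Qed.

Lemma iter_P_lin f g a b k X :
  has_continuous_extension f -> has_continuous_extension g -> 0 < X ->
  Nat.iter k P (fun x => a * f x + b * g x) X = a * Nat.iter k P f X + b * Nat.iter k P g X.
Proof.
  intros Hf Hg; revert X; induction k as [|k IH]; intros X HX; simpl; auto.
  rewrite (P_ext _ (fun x => a * Nat.iter k P f x + b * Nat.iter k P g x)) by auto.
  apply P_lin; auto using has_continuous_extension_iter_P.
Qed.

Lemma continuous_qcheck_succ j x : continuous (qcheck (S j)) x.
Proof. apply continuous_Rmult; [apply continuous_const | apply continuous_q_alpha]. Qed.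

Lemma is_RInt_mul_qcheck (w : R -> R) j a b l :
  is_RInt (fun x => w x * q (S j) (alpha x)) a b l ->
  is_RInt (fun x => w x * qcheck j x) a b (INR (Factorial.fact j) * l).
Proof.
  intros Hl; apply (is_RInt_ext (fun x => scal (INR (Factorial.fact j)) (w x * q (S j) (alpha x)))).
  - intros x _; unfold qcheck, scal; simpl; unfold mult; simpl; ring.
  - apply (is_RInt_scal (V := R_CompleteNormedModule)), Hl.
Qed.

Lemma P_pow_mul_qcheck k r Y : 0 < Y ->
  P (fun x => x ^ S k * qcheck r x) Y =
  / INR (S r) * (Y ^ k * qcheck (S r) Y)
  + (- INR (S k) / INR (S r)) * P (fun x => x ^ k * qcheck (S r) x) Y.
Proof.
  intros HY; unfold P.
  pose proof (is_RInt_pow_comp_alpha _ _ (continuous_q (S r)) (is_derive_q r) (q_periodic r)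
    k Y (Rlt_le _ _ HY)) as Hparts.
  pose proof (ex_RInt_of_continuous (fun t => t ^ k * q (S (S r)) (alpha t)) 0 Y
    (fun x => continuous_Rmult _ _ x (continuous_pow k x) (continuous_q_alpha r x))) as Hint.
  rewrite (is_RInt_unique _ _ _ _ (is_RInt_mul_qcheck _ r _ _ _ Hparts)).
  rewrite (is_RInt_unique _ _ _ _ (is_RInt_mul_qcheck _ (S r) _ _ _
    (RInt_correct (V := R_CompleteNormedModule) _ _ _ Hint))).
  unfold qcheck; rewrite fact_simpl, mult_INR.
  assert (0 < INR (S r)) by (apply lt_0_INR; lia).
  pose proof (INR_fact_neq_0 r).
  simpl pow; field; repeat split; lra.
Qed.

Lemma signed_inv_binomial_succ r k :
  (-1) ^ S k / Binomial.C (S r + k) (S k)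
  = - INR (S k) / INR (S r) * ((-1) ^ k / Binomial.C (S r + k) k).
Proof.
  unfold Binomial.C.
  replace (S r + k - S k)%nat with r by lia; replace (S r + k - k)%nat with (S r) by lia.
  rewrite !fact_simpl, !mult_INR.
  pose proof (INR_fact_neq_0 r); pose proof (INR_fact_neq_0 k).
  pose proof (INR_fact_neq_0 (S r + k)).
  assert (0 < INR (S r)) by (apply lt_0_INR; lia).
  assert (0 < INR (S k)) by (apply lt_0_INR; lia).
  simpl pow; field; repeat split; lra.
Qed.

Lemma binomial_C_neq_0 m k : Binomial.C m k <> 0.
Proof.
  unfold Binomial.C.
  apply Rmult_integral_contrapositive_currified; [apply INR_fact_neq_0|].
  apply Rinv_neq_0_compat, Rmult_integral_contrapositive_currified; apply INR_fact_neq_0.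
Qed.

Lemma iter_P_pow_mul_qcheck n : forall r X, 0 < X ->
  Nat.iter n P (fun x => x ^ n * qcheck r x) X =
  (-1) ^ n / Binomial.C (r + n) n * Pprod n (qcheck (r + n)) X.
Proof.
  induction n as [|k IH]; intros r X HX.
  - simpl; rewrite Nat.add_0_r; unfold Binomial.C; rewrite Nat.sub_0_r; simpl.
    pose proof (INR_fact_neq_0 r); field; auto.
  - set (a x := x ^ k * qcheck (S r) x).
    set (Pk := Pprod k (qcheck (S r + k))).
    assert (Ha : has_continuous_extension a).
    { apply has_continuous_extension_pow_mul, has_continuous_extension_of_continuous.
      apply continuous_qcheck_succ. }
    assert (HPk : has_continuous_extension Pk).
    { apply has_continuous_extension_Pprod, has_continuous_extension_of_continuous.
      apply continuous_qcheck_succ. }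
    rewrite Nat.iter_succ_r.
    rewrite (iter_P_ext _ (fun Y => / INR (S r) * a Y + (- INR (S k) / INR (S r)) * P a Y));
      [| intros Y HY; apply P_pow_mul_qcheck, HY | exact HX].
    rewrite iter_P_lin, Nat.iter_swap by auto using has_continuous_extension_P.
    replace (r + S k)%nat with (S r + k)%nat by lia.
    rewrite (P_ext _ (fun Y => (-1) ^ k / Binomial.C (S r + k) k * Pk Y));
      [| intros Y HY; apply IH, HY | exact HX].
    rewrite P_scal by auto; unfold a; rewrite (IH (S r) X HX); fold Pk.
    cbn [Pprod]; fold Pk; rewrite signed_inv_binomial_succ.
    pose proof (binomial_C_neq_0 (S r + k) k).
    assert (0 < INR (S r)) by (apply lt_0_INR; lia).
    assert (0 < INR (S k)) by (apply lt_0_INR; lia).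
    field; repeat split; lra.
Qed.

Theorem mainTheorem6 (n r : nat) (X : R) :
  (1 <= n)%nat -> 0 < X ->
  Nat.iter n P (fun x => x ^ n * qcheck r x) X =
  (-1) ^ n / Binomial.C (r + n) n * Pprod n (qcheck (r + n)) X.
Proof. intros _ HX; apply iter_P_pow_mul_qcheck, HX. Qed.
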